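(* Let $R$ be a ring. The following are equivalent: (a) $R$ satisfies the irreducible intersection property. (b) For every ideal $I\subsetneq R$ such that $\Sigma=\{p\in\mathrm{Spec}(R): p\subset I\}$ is nonempty, $\Sigma$ has a unique maximal element with respect to inclusion. (c) For all distinct prime ideals $p_1,p_2$ of $R$ with $p_1+p_2\neq R$, the set $\{p\in\mathrm{Spec}(R): p\subset p_1+p_2\}$ has a unique maximal element with respect to inclusion.
   Context: All rings are commutative with $1$. A ring $R$ satisfies the irreducible intersection property if for any prime ideals $p_1,p_2\subset R$, either $p_1+p_2=R$ or $p_1+p_2$ is a prime ideal. *)

From HB Require Import structures.
From mathcomp Require Import all_boot all_algebra.
Set Implicit Arguments. Unset Strict Implicit. Unset Printing Implicit Defensive.
Import GRing.Theory.
Local Open Scope ring_scope.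

Definition is_ideal (R : comPzRingType) (I : R -> Prop) : Prop :=
  I 0 /\ (forall x y, I x -> I y -> I (x + y)) /\ (forall r x, I x -> I (r * x)).

Definition ideal_sub (R : comPzRingType) (I J : R -> Prop) : Prop :=
  forall x, I x -> J x.
Definition ideal_eq (R : comPzRingType) (I J : R -> Prop) : Prop :=
  forall x, I x <-> J x.

Definition is_whole (R : comPzRingType) (I : R -> Prop) : Prop := forall x, I x.

Definition is_prime_ideal (R : comPzRingType) (p : R -> Prop) : Prop :=
  is_ideal p /\ ~ p 1 /\ (forall a b, p (a * b) -> p a \/ p b).

Definition ideal_add (R : comPzRingType) (I J : R -> Prop) : R -> Prop :=
  fun x => exists a b, I a /\ J b /\ x = a + b.

Definition irreducible_intersection_property (R : comPzRingType) : Prop :=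
  forall p1 p2 : R -> Prop, is_prime_ideal p1 -> is_prime_ideal p2 ->
    is_whole (ideal_add p1 p2) \/ is_prime_ideal (ideal_add p1 p2).

Definition primes_below (R : comPzRingType) (I : R -> Prop) (p : R -> Prop) : Prop :=
  is_prime_ideal p /\ ideal_sub p I.

Definition is_maximal_in (R : comPzRingType) (S : (R -> Prop) -> Prop)
  (m : R -> Prop) : Prop :=
  S m /\ (forall q, S q -> ideal_sub m q -> ideal_eq q m).

Definition unique_maximal (R : comPzRingType) (S : (R -> Prop) -> Prop) : Prop :=
  exists m, is_maximal_in S m /\ (forall m', is_maximal_in S m' -> ideal_eq m' m).

From HB Require Import structures.
From mathcomp Require Import all_boot all_algebra.
From mathcomp Require Import boolp classical_sets.
Import GRing.Theory.
Local Open Scope ring_scope.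
Local Open Scope classical_set_scope.
Set Implicit Arguments. Unset Strict Implicit.

(* Write Sigma(I) for the set of primes contained in an ideal I.  The proof
   rests on two general facts:
   - (Zorn) every prime in Sigma(I) lies below a maximal element of Sigma(I),
     since the union of a nonempty chain of primes is prime; hence a family
     Sigma(I) with a unique maximal element has a greatest element;
   - if Sigma(p1 + p2) has a greatest element m, then p1, p2 <= m <= p1 + p2,
     so p1 + p2 = m is prime.
   Then (a) -> (b): two maximal elements m, m' of Sigma(I) satisfy
   m + m' <= I proper, so m + m' is prime by (a), lies in Sigma(I) and by
   maximality equals both m and m'.  (b) -> (c) is the special case
   I = p1 + p2.  (c) -> (a) is the second fact, the case p1 = p2 being
   trivial because then p1 + p2 = p1. *)

Section IdealSums.
Variable R : comPzRingType.
Implicit Types I J K p q : R -> Prop.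

Lemma ideal_add_ideal I J : is_ideal I -> is_ideal J -> is_ideal (ideal_add I J).
Proof.
move=> [I0 [ID IM]] [J0 [JD JM]]; split; first by exists 0, 0; rewrite addr0.
split.
  move=> _ _ [a [b [Ia [Jb ->]]]] [c [d [Ic [Jd ->]]]].
  by exists (a + c), (b + d); rewrite addrACA; auto.
move=> r _ [a [b [Ia [Jb ->]]]]; exists (r * a), (r * b).
by rewrite mulrDr; auto.
Qed.

Lemma ideal_add_subl I J : is_ideal J -> ideal_sub I (ideal_add I J).
Proof. by move=> [J0 _] x Ix; exists x, 0; rewrite addr0. Qed.

Lemma ideal_add_subr I J : is_ideal I -> ideal_sub J (ideal_add I J).
Proof. by move=> [I0 _] x Jx; exists 0, x; rewrite add0r. Qed.

Lemma ideal_add_least I J K :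
  is_ideal K -> ideal_sub I K -> ideal_sub J K -> ideal_sub (ideal_add I J) K.
Proof. by move=> [_ [KD _]] IK JK _ [a [b [Ia [Jb ->]]]]; apply: KD; auto. Qed.

Lemma prime_ideal_eq p q : ideal_eq p q -> is_prime_ideal p -> is_prime_ideal q.
Proof.
move=> e [[p0 [pD pM]] [p1 pP]]; split; last split.
- split; first exact/e.
  split; first by move=> x y /e ? /e ?; apply/e; auto.
  by move=> r x /e ?; apply/e; auto.
- by move/e.
- by move=> a b /e /pP [] ?; [left|right]; apply/e.
Qed.

Lemma primes_below_addl p J :
  is_prime_ideal p -> is_ideal J -> primes_below (ideal_add p J) p.
Proof. by move=> pp iJ; split => //; exact: ideal_add_subl. Qed.

End IdealSums.

Section MaximalPrimes.
Variable R : comPzRingType.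
Implicit Types I p q m : R -> Prop.

Lemma chain_union_prime (F : set (R -> Prop)) :
  (exists X, F X) -> (forall X, F X -> is_prime_ideal X) ->
  total_on F subset -> is_prime_ideal (\bigcup_(X in F) X).
Proof.
move=> [X0 FX0] Fprime Ftot; split; last split.
- split; first by exists X0 => //; have [[]] := Fprime X0 FX0.
  split=> [x y [X FX Xx] [Y FY Yy]|r x [X FX Xx]]; last first.
    by exists X => //; have [[_ [_ XM]] _] := Fprime X FX; exact: XM.
  have [[_ [XD _]] _] := Fprime X FX; have [[_ [YD _]] _] := Fprime Y FY.
  by case: (Ftot X Y FX FY) => [XY|YX]; [exists Y => //; apply: YD; auto
                                         |exists X => //; apply: XD; auto].
- by move=> [X FX X1]; have [_ []] := Fprime X FX.
- move=> a b [X FX Xab]; have [_ [_ XP]] := Fprime X FX.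
  by case: (XP a b Xab) => ?; [left|right]; exists X.
Qed.

Lemma exists_maximal_prime_above I p :
  primes_below I p -> exists m, is_maximal_in (primes_below I) m /\ ideal_sub p m.
Proof.
(* Zorn is applied to the primes of Sigma(I) above p together with the empty
   set, which is needed as the union of the empty chain. *)
move=> Ip.
pose good A := primes_below I A /\ ideal_sub p A.
have [|A [[A0|gA] Amax]] := @Zorn_bigcup R (fun A => A = set0 \/ good A).
- (* Empty members do not contribute to the union of a chain. *)
  move=> F FP Ftot; set G := F `&` good.
  have UFG : \bigcup_(X in F) X = \bigcup_(X in G) X.
    apply/seteqP; split=> x [X FX Xx]; last by exists X => //; case: FX.
    exists X => //; split=> //; case: (FP X FX) => // X0.
    by move: Xx; rewrite X0.
  have [[X0 GX0]|noG] := pselect (exists X, G X); last first.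
    by left; rewrite UFG; apply/seteqP; split=> // x [X GX _]; case: noG; exists X.
  right; rewrite UFG; split; [split|].
  + apply: chain_union_prime; first by exists X0.
      by move=> X [_ [[Xp _] _]].
    by move=> X Y [FX _] [FY _]; exact: Ftot.
  + by move=> x [X [_ [[_ XI] _]] Xx]; exact: XI.
  + by move=> x px; exists X0 => //; apply: GX0.2.2.
- have [[[p0 _] _] _] := Ip.
  have goodp : good p by split.
  by case: (Amax p (_ : A `<` p)); [rewrite A0; split=> // /(_ 0 p0) | right].
- exists A; split; last exact: gA.2.
  split=> [|q Iq Aq]; first exact: gA.1.
  have [qA|nqA] := pselect (ideal_sub q A); first by move=> x; split; auto.
  have goodq : good q by split=> // x /gA.2; exact: Aq.
  by case: (Amax q (_ : A `<` q)); [split | right].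
Qed.

Lemma unique_maximal_greatest I :
  unique_maximal (primes_below I) ->
  exists m, primes_below I m /\ forall q, primes_below I q -> ideal_sub q m.
Proof.
move=> [m [[Im _] m_uniq]]; exists m; split=> // q Iq.
have [m' [m'max qm']] := exists_maximal_prime_above Iq.
by move=> x /qm' /(m_uniq m' m'max).
Qed.

(* If Sigma(p1 + p2) has a unique maximal element, then p1 + p2 is prime:
   it coincides with the greatest prime below it. *)
Lemma prime_sum_of_unique_maximal p1 p2 :
  is_prime_ideal p1 -> is_prime_ideal p2 ->
  unique_maximal (primes_below (ideal_add p1 p2)) ->
  is_prime_ideal (ideal_add p1 p2).
Proof.
move=> p1p p2p /unique_maximal_greatest [m [[mp m_sub] m_top]].
have p1m : ideal_sub p1 m by apply: m_top; exact: primes_below_addl p2p.1.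
have p2m : ideal_sub p2 m.
  by apply: m_top; split=> //; exact: ideal_add_subr p1p.1.
apply: (prime_ideal_eq _ mp) => x; split; first exact: m_sub.
by apply: ideal_add_least => //; exact: mp.1.
Qed.

End MaximalPrimes.

Section Equivalences.
Variable R : comPzRingType.

Definition unique_maximal_below_proper : Prop :=
  forall I : R -> Prop, is_ideal I -> ~ is_whole I ->
    (exists p, primes_below I p) -> unique_maximal (primes_below I).

Definition unique_maximal_below_prime_sums : Prop :=
  forall p1 p2 : R -> Prop, is_prime_ideal p1 -> is_prime_ideal p2 ->
    ~ ideal_eq p1 p2 -> ~ is_whole (ideal_add p1 p2) ->
    unique_maximal (primes_below (ideal_add p1 p2)).

(* (a) -> (b): the sum of two maximal primes below I is a prime below I. *)
Lemma iip_unique_maximal :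
  irreducible_intersection_property R -> unique_maximal_below_proper.
Proof.
move=> iip I iI nwI [p Ip].
have [m [mmax _]] := exists_maximal_prime_above Ip.
exists m; split=> // m' m'max.
have [[mp mI] m_top] := mmax; have [[m'p m'I] m'_top] := m'max.
have sumI : ideal_sub (ideal_add m m') I by apply: ideal_add_least.
have I_sum : primes_below I (ideal_add m m').
  split=> //; case: (iip m m' mp m'p) => // whole.
  by case: nwI => x; apply/sumI/whole.
have e := m_top _ I_sum (@ideal_add_subl _ m m' m'p.1).
have e' := m'_top _ I_sum (@ideal_add_subr _ m m' mp.1).
by move=> x; rewrite -e' e.
Qed.

Lemma unique_maximal_prime_sums :
  unique_maximal_below_proper -> unique_maximal_below_prime_sums.
Proof.
move=> umax p1 p2 p1p p2p _ nw; apply: umax => //.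
  exact: ideal_add_ideal p1p.1 p2p.1.
by exists p1; exact: primes_below_addl p2p.1.
Qed.

(* (c) -> (a): if p1 = p2 then p1 + p2 = p1; otherwise use
   [prime_sum_of_unique_maximal]. *)
Lemma prime_sums_iip :
  unique_maximal_below_prime_sums -> irreducible_intersection_property R.
Proof.
move=> umax p1 p2 p1p p2p.
have [whole|nw] := pselect (is_whole (ideal_add p1 p2)); [by left|right].
have [e|ne] := pselect (ideal_eq p1 p2); last first.
  by apply: prime_sum_of_unique_maximal => //; exact: umax.
apply: (prime_ideal_eq _ p1p) => x; split; move: x.
  exact: ideal_add_subl p2p.1.
by apply: ideal_add_least => //; [exact: p1p.1 | move=> y /e].
Qed.

End Equivalences.

Theorem mainTheorem8 (R : comPzRingType) :
  (irreducible_intersection_property R <->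
   (forall I : R -> Prop, is_ideal I -> ~ is_whole I ->
      (exists p, primes_below I p) -> unique_maximal (primes_below I)))
  /\
  ((forall I : R -> Prop, is_ideal I -> ~ is_whole I ->
      (exists p, primes_below I p) -> unique_maximal (primes_below I)) <->
   (forall p1 p2 : R -> Prop, is_prime_ideal p1 -> is_prime_ideal p2 ->
      ~ ideal_eq p1 p2 -> ~ is_whole (ideal_add p1 p2) ->
      unique_maximal (primes_below (ideal_add p1 p2)))).
Proof.
have a_b := @iip_unique_maximal R.
have b_c := @unique_maximal_prime_sums R.
have c_a := @prime_sums_iip R.
split; split.
- exact: a_b.
- by move=> /b_c /c_a.
- exact: b_c.
- by move=> /c_a /a_b.
Qed.
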